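(* Let $G$ be a graph with no isolated vertices and $b_{tR}(G)<\infty$, and let $B$ be a $b_{tR}(G)$-set. Then $\gamma_{tR}(G)+1\le \gamma_{tR}(G-B)\le \gamma_{tR}(G)+2$. Both bounds are sharp: the upper bound is attained by the bistars $S_{p,q}$ with $q\ge p\ge 2$, and the lower bound by $S_{1,q}$ with $q\ge2$.
   Context: A TRDF on $G=(V,E)$ is a function $f:V\to\{0,1,2\}$ such that every $v$ with $f(v)=0$ has a neighbor $u$ with $f(u)=2$ and the subgraph induced by $\{v:f(v)>0\}$ has no isolated vertices; $\gamma_{tR}(G)$ is the minimum weight $\sum_v f(v)$ of a TRDF. $b_{tR}(G)$ is the minimum $|E'|$, $E'\subseteq E(G)$, such that $G-E'$ has no isolated vertices and $\gamma_{tR}(G-E')>\gamma_{tR}(G)$ ($\infty$ if none). A $b_{tR}(G)$-set is an edge set $B$ with $|B|=b_{tR}(G)$, $G-B$ without isolated vertices, and $\gamma_{tR}(G-B)>\gamma_{tR}(G)$. The bistar $S_{r,s}$ is the tree of diameter 3 whose two central vertices are adjacent to $r$ and $s$ leaves respectively. *)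

From mathcomp Require Import all_boot.
Set Implicit Arguments. Unset Strict Implicit. Unset Printing Implicit Defensive.

Section Graphs.
Variable V : finType.

Definition simple_graph (e : rel V) : Prop := symmetric e /\ irreflexive e.

Definition no_isolated (e : rel V) : bool := [forall v, [exists u, e v u]].

Definition edges (e : rel V) : {set {set V}} :=
  [set s : {set V} | [exists x, [exists y, e x y && (s == [set x; y])]]].

Definition del_edges (e : rel V) (B : {set {set V}}) : rel V :=
  fun x y => e x y && ([set x; y] \notin B).

Definition isTRDF (e : rel V) (f : {ffun V -> 'I_3}) : bool :=
  [forall v, ((f v : nat) == 0) ==> [exists u, e v u && ((f u : nat) == 2)]] &&
  [forall v, (0 < f v) ==> [exists u, e v u && (0 < f u)]].

Definition weight (f : {ffun V -> 'I_3}) : nat := \sum_(v : V) (f v : nat).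

(* gamma_tR: minimum weight of a TRDF (the default 2|V| is never below
   the weight of a TRDF, and a TRDF exists whenever there are no isolated
   vertices, e.g. the constant 2). *)
Definition gammatR (e : rel V) : nat :=
  \big[minn/(2 * #|V|)]_(f : {ffun V -> 'I_3} | isTRDF e f) weight f.

Definition bondage_cand (e : rel V) (B : {set {set V}}) : bool :=
  [&& B \subset edges e, no_isolated (del_edges e B)
    & gammatR e < gammatR (del_edges e B)].

(* b_tR(G) : None encodes infinity *)
Definition btR (e : rel V) : option nat :=
  if [exists B, bondage_cand e B] then
    Some (\big[minn/#|{set {set V}}|]_(B | bondage_cand e B) #|B|)
  else None.

Definition btR_set (e : rel V) (B : {set {set V}}) : bool :=
  bondage_cand e B && (btR e == Some #|B|).

End Graphs.

(* Bistar S_{p,q} on vertices 0..p+q+1 : centers 0 and 1; leaves 2..p+1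
   attached to 0, leaves p+2..p+q+1 attached to 1. *)
Definition bistar_base (p q : nat) (x y : 'I_(p + q).+2) : bool :=
  [|| ((x : nat) == 0) && ((y : nat) == 1),
      ((x : nat) == 0) && (2 <= y < p + 2)
    | ((x : nat) == 1) && (p + 2 <= y)].
Arguments bistar_base : clear implicits.

Definition bistar (p q : nat) : rel 'I_(p + q).+2 :=
  fun x y => bistar_base p q x y || bistar_base p q y x.
Arguments bistar : clear implicits.

(* Let [xy] be an edge of a [b_tR]-set [B]. Then [B :\ xy] is a smaller edge set whose
   removal leaves no isolated vertex, so by minimality it does not raise [gamma_tR]. A
   minimum TRDF of [G - (B :\ xy)] becomes a TRDF of [G - B] after raising at most two
   values from [0] to [1], which gives the upper bound.
   In the bistar [S_{p,q}] a leaf and its centre carry weight at least [2], so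
   [gamma_tR(S_{p,q}) = 4]. Once the middle edge is deleted, the two sides are stars
   and a star with at least two leaves needs weight [3]: this gives [6] for [p >= 2]
   and [5] for [p = 1]. The middle edge alone is then a
   [b_tR]-set, since bondage candidates are nonempty. *)

From mathcomp Require Import all_boot zify.
Set Implicit Arguments. Unset Strict Implicit. Unset Printing Implicit Defensive.

Lemma bigmin_le_seq (I : eqType) (r : seq I) (P : pred I) (F : I -> nat) x0 j :
  j \in r -> P j -> \big[minn/x0]_(i <- r | P i) F i <= F j.
Proof.
elim: r => [//|a r IH]; rewrite inE big_cons => /orP[/eqP->|jr] Pj.
- by rewrite Pj geq_minl.
- case: (P a); last exact: IH.
  by rewrite (leq_trans (geq_minr _ _)) ?IH.
Qed.

Lemma bigmin_le (I : finType) (P : pred I) (F : I -> nat) x0 j :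
  P j -> \big[minn/x0]_(i | P i) F i <= F j.
Proof. by move=> Pj; apply: bigmin_le_seq => //; rewrite mem_index_enum. Qed.

Lemma bigmin_ge (I : finType) (P : pred I) (F : I -> nat) x0 k :
  k <= x0 -> (forall i, P i -> k <= F i) -> k <= \big[minn/x0]_(i | P i) F i.
Proof. by move=> le_k_x0 le_k_F; elim/big_ind: _ => // a b; rewrite leq_min => ->. Qed.

Lemma bigmin_attained (I : finType) (P : pred I) (F : I -> nat) x0 j :
  P j -> (forall i, P i -> F i <= x0) ->
  exists2 i, P i & \big[minn/x0]_(i | P i) F i = F i.
Proof.
move=> Pj F_le.
have [min_x0|//] : (\big[minn/x0]_(i | P i) F i = x0) \/
               exists2 i, P i & \big[minn/x0]_(i | P i) F i = F i.
  elim/big_ind: _ => [|a b Ha Hb|i Pi]; [by left| |by right; exists i].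
  by rewrite /minn; case: ifP.
by exists j => //; apply/eqP; rewrite eqn_leq bigmin_le //= min_x0 F_le.
Qed.

Section TotalRomanDomination.
Variable V : finType.
Implicit Types (e : rel V) (f : {ffun V -> 'I_3}) (S : {set V}) (B : {set {set V}}).

Lemma isTRDFP e f : isTRDF e f <->
  (forall v, (f v : nat) = 0 -> exists2 u, e v u & (f u : nat) = 2) /\
  (forall v, 0 < f v -> exists2 u, e v u & 0 < f u).
Proof.
split.
- case/andP=> /forallP dom /forallP tot; split=> v fv.
  + by move: (dom v); rewrite fv eqxx => /existsP[u /andP[euv /eqP]]; exists u.
  + by move: (tot v); rewrite fv => /existsP[u /andP[]]; exists u.
- case=> dom tot; apply/andP; split; apply/forallP=> v; apply/implyP.
  + by move=> /eqP/dom[u euv fu]; apply/existsP; exists u; rewrite euv fu.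
  + by move=> /tot[u euv fu]; apply/existsP; exists u; rewrite euv fu.
Qed.

Lemma weight_le f : weight f <= 2 * #|V|.
Proof.
rewrite mulnC -sum_nat_const; apply: leq_sum => v _.
by rewrite -ltnS ltn_ord.
Qed.

Lemma gammatR_le e f : isTRDF e f -> gammatR e <= weight f.
Proof. exact: bigmin_le. Qed.

Lemma gammatR_ge e k :
  k <= 2 * #|V| -> (forall f, isTRDF e f -> k <= weight f) -> k <= gammatR e.
Proof. exact: bigmin_ge. Qed.

Lemma gammatR_eq e f k : isTRDF e f -> weight f = k ->
  (forall g, isTRDF e g -> k <= weight g) -> gammatR e = k.
Proof.
move=> trdf <- min_f; apply/anti_leq; rewrite gammatR_le //=.
by apply: gammatR_ge; rewrite ?weight_le.
Qed.

Lemma isTRDF_const2 e : no_isolated e -> isTRDF e [ffun=> Ordinal (isT : 2 < 3)].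
Proof.
move=> /forallP noiso; apply/isTRDFP; split=> v; rewrite ffunE // => _.
by have /existsP[u evu] := noiso v; exists u; rewrite ?ffunE.
Qed.

Lemma gammatR_attained e :
  no_isolated e -> exists2 f, isTRDF e f & gammatR e = weight f.
Proof. by move/isTRDF_const2/bigmin_attained; apply=> f _; apply: weight_le. Qed.

Lemma eq_gammatR e1 e2 : e1 =2 e2 -> gammatR e1 = gammatR e2.
Proof.
move=> e12; apply: eq_bigl => f; rewrite /isTRDF.
by congr (_ && _); apply: eq_forallb => v; congr (_ ==> _);
  apply: eq_existsb => u; rewrite e12.
Qed.

Lemma bondage_cand_neq0 e B : bondage_cand e B -> B != set0.
Proof.
case/and3P=> _ _; apply: contraTneq => ->.
by rewrite (@eq_gammatR _ e) ?ltnn // => x y; rewrite /del_edges in_set0 andbT.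
Qed.

Definition raise f (S : {set V}) : {ffun V -> 'I_3} :=
  [ffun v => if (v \in S) && ((f v : nat) == 0) then Ordinal (isT : 1 < 3) else f v].

Lemma raiseE f S v :
  (raise f S v : nat) = if (v \in S) && ((f v : nat) == 0) then 1 else f v.
Proof. by rewrite ffunE; case: ifP. Qed.

Lemma raise_pos f S u : (0 < f u) || (u \in S) -> 0 < raise f S u.
Proof. by rewrite raiseE; case: (u \in S); case: (f u : nat). Qed.

Lemma weight_raise f S : weight (raise f S) <= weight f + #|S|.
Proof.
rewrite /weight -sum1_card (big_mkcond (fun v => v \in S)) /= -big_split /=.
apply: leq_sum => v _; rewrite raiseE.
by case: (v \in S); case: (f v : nat) => [|n] /=; lia.
Qed.

Definition supported e f S :=
  forall v, v \in S -> exists2 u, e v u & (0 < f u) || (u \in S).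

(* What a TRDF [f] of [e1] needs at a lost arc [(v, u)] of [e2] so that
   [raise f S] is a TRDF of [e2]. *)
Definition repairs e2 f S v u :=
  v \notin S -> ((f v : nat) = 0 -> (f u : nat) <> 2) /\
  (0 < f v -> 0 < f u -> exists2 w, e2 v w & (0 < f w) || (w \in S)).

Lemma isTRDF_raise e1 e2 f S :
  isTRDF e1 f -> supported e2 f S ->
  (forall v u, e1 v u -> ~~ e2 v u -> repairs e2 f S v u) ->
  isTRDF e2 (raise f S).
Proof.
move=> /isTRDFP[dom tot] suppS lost; apply/isTRDFP; split=> v.
- rewrite raiseE; case: ifP => [//|+ fv0]; rewrite fv0 eqxx andbT => vS.
  have [u e1vu fu2] := dom v fv0; exists u; last by rewrite raiseE fu2 andbF.
  apply/negPn/negP => ne2vu.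
  by have [/(_ fv0 fu2)] := lost v u e1vu ne2vu (negbT vS).
- move=> fv; have [vS|vS] := boolP (v \in S).
    by have [u ? ?] := suppS v vS; exists u => //; apply: raise_pos.
  move: fv; rewrite raiseE (negbTE vS) => fv.
  have [u e1vu fu] := tot v fv.
  have [e2vu|ne2vu] := boolP (e2 v u).
    by exists u => //; apply: raise_pos; rewrite fu.
  have [_ /(_ fv fu)[w ? ?]] := lost v u e1vu ne2vu vS.
  by exists w => //; apply: raise_pos.
Qed.

Lemma no_isolated_sub e1 e2 :
  (forall v u, e2 v u -> e1 v u) -> no_isolated e2 -> no_isolated e1.
Proof.
move=> e21 /forallP noiso2; apply/forallP=> v.
by have /existsP[u /e21 e1vu] := noiso2 v; apply/existsP; exists u.
Qed.

Section DeleteOneEdge.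
Variables (e1 e2 : rel V) (x y : V).
Hypotheses (e2_sym : symmetric e2) (e2_noiso : no_isolated e2).
Hypothesis lost_arc : forall v u, e1 v u -> ~~ e2 v u ->
  (v == x) && (u == y) || (v == y) && (u == x).

Lemma supported_pair f a b : e2 a b -> supported e2 f [set a; b].
Proof.
move=> e2ab v; rewrite in_set2 => /orP[]/eqP->.
- by exists b; rewrite // set22 orbT.
- by exists a; rewrite 1?e2_sym // set21 orbT.
Qed.

(* Relabel [x] and a neighbour if [x] relied on its [2]-neighbour [y], symmetrically
   for [y], or a neighbour of each of [x] and [y] if both are positive. *)
Lemma isTRDF_del_edge f :
  isTRDF e1 f -> exists2 g, isTRDF e2 g & weight g <= weight f + 2.
Proof.
move=> trdf.
have /existsP[x' e2xx'] := forallP e2_noiso x.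
have /existsP[y' e2yy'] := forallP e2_noiso y.
suff [S [cardS suppS rep_xy rep_yx]] : exists S, [/\ #|S| <= 2, supported e2 f S,
    repairs e2 f S x y & repairs e2 f S y x].
  exists (raise f S); last by rewrite (leq_trans (weight_raise f S)) ?leq_add2l.
  apply: isTRDF_raise trdf suppS _ => v u e1vu ne2vu.
  by case/orP: (lost_arc e1vu ne2vu) => /andP[/eqP-> /eqP->].
have card2 a b : #|[set a; b]| <= 2 by rewrite cards2; case: (_ != _).
have [/andP[/eqP fx /eqP fy]|nA] := boolP (((f x : nat) == 0) && ((f y : nat) == 2)).
  exists [set x; x']; split; rewrite /repairs ?set21 //; first exact: supported_pair.
  by split=> [? ?|? ?]; exfalso; lia.
have [/andP[/eqP fy /eqP fx]|nB] := boolP (((f y : nat) == 0) && ((f x : nat) == 2)).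
  exists [set y; y']; split; rewrite /repairs ?set21 //; first exact: supported_pair.
  by split=> [? ?|? ?]; exfalso; lia.
have [/andP[fx fy]|nC] := boolP ((0 < f x) && (0 < f y)).
  exists [set x'; y']; split => //.
  - move=> v; rewrite in_set2 => /orP[]/eqP->.
    + by exists x; rewrite 1?e2_sym ?fx.
    + by exists y; rewrite 1?e2_sym ?fy.
  - by split=> [? ?|_ _]; [lia|exists x'; rewrite ?set21 ?orbT].
  - by split=> [? ?|_ _]; [lia|exists y'; rewrite ?set22 ?orbT].
exists set0; split; rewrite ?cards0 //.
- by move=> v; rewrite in_set0.
- by move=> _; split=> [? ?|? ?]; exfalso; lia.
- by move=> _; split=> [? ?|? ?]; exfalso; lia.
Qed.

Hypothesis e1_noiso : no_isolated e1.

Lemma gammatR_del_edge_le : gammatR e2 <= gammatR e1 + 2.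
Proof.
have [f trdf ->] := gammatR_attained e1_noiso.
have [g trdg wg] := isTRDF_del_edge trdf.
exact: leq_trans (gammatR_le trdg) wg.
Qed.

End DeleteOneEdge.

Lemma eq_set2 (v u x y : V) :
  [set v; u] = [set x; y] -> (v == x) && (u == y) || (v == y) && (u == x).
Proof.
move=> vu_xy.
have := set21 v u; have := set22 v u; have := set21 x y; have := set22 x y.
rewrite vu_xy -{1 2}vu_xy !in_set2.
by do 4![case/orP=> /eqP ?]; subst; rewrite ?eqxx ?orbT.
Qed.

Lemma del_edges_sym e B : symmetric e -> symmetric (del_edges e B).
Proof. by move=> esym v u; rewrite /del_edges esym setUC. Qed.

Lemma del_edges_setD1 e B s v u :
  del_edges e (B :\ s) v u -> ~~ del_edges e B v u -> [set v; u] = s.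
Proof.
by rewrite /del_edges in_setD1 => /andP[-> /nandP[/negPn/eqP //|/negbTE ->]].
Qed.

Lemma btR_set_minimal e B B' :
  btR_set e B -> #|B'| < #|B| -> B' \subset edges e ->
  no_isolated (del_edges e B') -> gammatR (del_edges e B') <= gammatR e.
Proof.
case/andP=> candB; rewrite /btR.
have -> : [exists B0, bondage_cand e B0] by apply/existsP; exists B.
move=> /eqP[<-] ltB' subB' noisoB'; rewrite leqNgt; apply: contraL ltB' => lt_gamma.
by rewrite -leqNgt; apply: bigmin_le; rewrite /bondage_cand subB' noisoB'.
Qed.

Lemma btR_set_gammatR_bounds e B : symmetric e -> btR_set e B ->
  gammatR e + 1 <= gammatR (del_edges e B) <= gammatR e + 2.
Proof.
move=> esym btrB; have /andP[candB _] := btrB.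
have /and3P[Bsub noiso lt_gamma] := candB; rewrite addn1 lt_gamma /=.
have /set0Pn[s sB] := bondage_cand_neq0 candB.
have := subsetP Bsub s sB; rewrite inE => /existsP[x /existsP[y /andP[_ /eqP s_xy]]].
have noiso1 : no_isolated (del_edges e (B :\ s)).
  apply: no_isolated_sub noiso => v u /andP[evu vuB].
  by rewrite /del_edges evu in_setD1 negb_and vuB orbT.
apply: leq_trans (gammatR_del_edge_le (x := x) (y := y) _ noiso _ noiso1) _.
- exact: del_edges_sym.
- by move=> v u e1vu ne2vu; apply: eq_set2; rewrite -s_xy; apply: del_edges_setD1 ne2vu.
rewrite leq_add2r; apply: (btR_set_minimal btrB) noiso1.
- by rewrite [#|B|](cardsD1 s) sB.
- exact: subset_trans (subsetDl _ _) Bsub.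
Qed.

Lemma btR_set_card1 e B : bondage_cand e B -> #|B| = 1 -> btR_set e B.
Proof.
move=> candB cardB; rewrite /btR_set candB /btR.
have -> : [exists B0, bondage_cand e B0] by apply/existsP; exists B.
rewrite cardB; apply/eqP; congr Some; apply/anti_leq/andP; split.
- by rewrite -cardB; apply: bigmin_le.
- apply: bigmin_ge => [|B0 /bondage_cand_neq0]; last by rewrite card_gt0.
  by apply/card_gt0P; exists B.
Qed.

Lemma leq_sum2 (A : pred V) (F : V -> nat) a b :
  a != b -> A a -> A b -> F a + F b <= \sum_(v | A v) F v.
Proof.
move=> ab Aa Ab; rewrite (bigD1 a) //= (bigD1 b) /=; last by rewrite Ab eq_sym ab.
by rewrite addnA leq_addr.
Qed.

Lemma leq_sum3 (A : pred V) (F : V -> nat) a b c :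
  a != b -> a != c -> b != c -> A a -> A b -> A c ->
  F a + F b + F c <= \sum_(v | A v) F v.
Proof.
move=> ab ac bc Aa Ab Ac; rewrite (bigD1 a) //= (bigD1 b) /=; last by rewrite Ab eq_sym ab.
rewrite (bigD1 c) /=; last by rewrite Ac ![c == _]eq_sym bc ac.
by rewrite !addnA leq_addr.
Qed.

Lemma leaf_weight e f l c :
  isTRDF e f -> (forall u, e l u -> u = c) -> 2 <= f l + f c.
Proof.
move=> /isTRDFP[dom tot] leaf; case fl: (f l : nat) => [|n].
  by have [u /leaf <- ->] := dom l fl.
by have [|u /leaf -> fc] := tot l; rewrite ?fl //; lia.
Qed.

Lemma two_leaves_sum e f (A : pred V) c l1 l2 :
  isTRDF e f -> A c -> A l1 -> A l2 -> l1 != c -> l2 != c -> l1 != l2 ->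
  (forall u, e l1 u -> u = c) -> (forall u, e l2 u -> u = c) ->
  (forall u, e c u -> A u && (u != c)) -> 3 <= \sum_(v | A v) f v.
Proof.
move=> trdf Ac Al1 Al2 l1c l2c l12 leaf1 leaf2 nbrs.
have [fc_le1|fc_ge2] := leqP (f c) 1.
  have := leaf_weight trdf leaf1; have := leaf_weight trdf leaf2.
  have := leq_sum3 (fun v => f v : nat) l12 l1c l2c Al1 Al2 Ac; lia.
have /isTRDFP[_ tot] := trdf.
have [|u /nbrs/andP[Au uc] fu] := tot c; first exact: leq_trans fc_ge2.
by have := leq_sum2 (fun v => f v : nat) uc Au Ac; lia.
Qed.

End TotalRomanDomination.

Lemma sum_ord_indicator n c k : \sum_(v < n) c * ((v : nat) == k) = c * (k < n).
Proof.
elim: n => [|n IH]; first by rewrite big_ord0 muln0.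
by rewrite big_ord_recr /= IH; lia.
Qed.

Section Bistar.
Variables p q : nat.
Hypotheses (p_gt0 : 0 < p) (q_gt1 : 1 < q).
Local Notation W := 'I_(p + q).+2.
Local Notation G := (bistar p q).

Definition vx (k : nat) : W := inord k.

Lemma vxE k : k < (p + q).+2 -> (vx k : nat) = k.
Proof. exact: inordK. Qed.

Lemma vx_small :
  [/\ (vx 0 : nat) = 0, (vx 1 : nat) = 1, (vx 2 : nat) = 2 & (vx 3 : nat) = 3].
Proof. by split; rewrite vxE //; lia. Qed.

Lemma vx_right : (vx (p + 2) : nat) = p + 2 /\ (vx (p + 3) : nat) = p + 3.
Proof. by split; rewrite vxE //; lia. Qed.

Ltac bistar_lia :=
  move: vx_small vx_right p_gt0 q_gt1 => [? ? ? ?] [? ?] ? ?;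
  unfold bistar, bistar_base in *; lia.

Definition middle_edge : {set {set W}} := [set [set vx 0; vx 1]].
Local Notation G' := (del_edges G middle_edge).

Lemma del_middleE (x y : W) : G' x y = G x y && ((1 < x) || (1 < y)).
Proof.
rewrite /del_edges in_set1; case: (boolP ((1 < x) || (1 < y))) => xy.
- rewrite andbT; case: (G x y) => //=; apply/eqP => xy01.
  have : (x \in [set vx 0; vx 1]) && (y \in [set vx 0; vx 1]).
    by rewrite -xy01 set21 set22.
  by rewrite !in_set2 -!val_eqE /=; move: xy; bistar_lia.
- rewrite andbF; case Gxy: (G x y) => //=; apply: negbF; apply/eqP.
  have /orP[] : ((x == vx 0) && (y == vx 1)) || ((x == vx 1) && (y == vx 0)).
    by rewrite -!val_eqE /=; move: Gxy xy; bistar_lia.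
  + by case/andP=> /eqP-> /eqP->.
  + by case/andP=> /eqP-> /eqP->; rewrite setUC.
Qed.

Definition left_side (v : W) : bool := (v < p + 2) && (v != 1 :> nat).

Lemma weight_sides (f : {ffun W -> 'I_3}) :
  weight f = \sum_(v | left_side v) f v + \sum_(v | ~~ left_side v) f v.
Proof. exact: bigID. Qed.

Lemma vx_neq a b : a < (p + q).+2 -> b < (p + q).+2 -> a != b -> vx a != vx b.
Proof. by move=> ? ? ab; rewrite -val_eqE /= !vxE. Qed.

Lemma del_middle_sub x y : G' x y -> G x y.
Proof. by case/andP. Qed.

Section Subgraph.
Variables (e : rel W) (f : {ffun W -> 'I_3}).
Hypothesis e_sub : forall x y, e x y -> G x y.

Lemma left_leaf_nbr l : 1 < l < p + 2 -> forall u, e (vx l) u -> u = vx 0.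
Proof.
move=> l_leaf u /e_sub Glu; have /vxE vxl : l < (p + q).+2 by lia.
apply: val_inj => /=; move: l_leaf Glu (ltn_ord u).
by rewrite /bistar /bistar_base vxl; bistar_lia.
Qed.

Lemma right_leaf_nbr l : p + 2 <= l < (p + q).+2 -> forall u, e (vx l) u -> u = vx 1.
Proof.
move=> l_leaf u /e_sub Glu; have /vxE vxl : l < (p + q).+2 by lia.
apply: val_inj => /=; move: l_leaf Glu (ltn_ord u).
by rewrite /bistar /bistar_base vxl; bistar_lia.
Qed.

Hypothesis trdf : isTRDF e f.

Lemma left_sum_ge2 : 2 <= \sum_(v | left_side v) f v.
Proof.
apply: leq_trans (leaf_weight trdf (left_leaf_nbr (l := 2) _)) _; first by lia.
by apply: leq_sum2; rewrite ?vx_neq //; rewrite /left_side; bistar_lia.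
Qed.

Lemma right_sum_ge2 : 2 <= \sum_(v | ~~ left_side v) f v.
Proof.
apply: leq_trans (leaf_weight trdf (right_leaf_nbr (l := p + 2) _)) _; first by lia.
by apply: leq_sum2; rewrite ?vx_neq //; rewrite /left_side; bistar_lia.
Qed.

End Subgraph.

Lemma right_sum_del_ge3 f : isTRDF G' f -> 3 <= \sum_(v | ~~ left_side v) f v.
Proof.
move=> trdf.
apply: (two_leaves_sum (c := vx 1) (l1 := vx (p + 2)) (l2 := vx (p + 3)) trdf);
  rewrite ?vx_neq //; try by rewrite /left_side; bistar_lia.
- by apply: (right_leaf_nbr del_middle_sub); lia.
- by apply: (right_leaf_nbr del_middle_sub); lia.
- move=> u; rewrite del_middleE /left_side -val_eqE /= => Gu.
  by apply/andP; split; move: Gu (ltn_ord u); bistar_lia.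
Qed.

Lemma left_sum_del_ge3 f : 1 < p -> isTRDF G' f -> 3 <= \sum_(v | left_side v) f v.
Proof.
move=> p_gt1 trdf.
apply: (two_leaves_sum (c := vx 0) (l1 := vx 2) (l2 := vx 3) trdf);
  rewrite ?vx_neq //; try by rewrite /left_side; move: p_gt1; bistar_lia.
- by apply: (left_leaf_nbr del_middle_sub); lia.
- by apply: (left_leaf_nbr del_middle_sub); lia.
- move=> u; rewrite del_middleE /left_side -val_eqE /= => Gu.
  by apply/andP; split; move: Gu (ltn_ord u); bistar_lia.
Qed.

Definition labelling (g : nat -> nat) : {ffun W -> 'I_3} := [ffun v : W => inord (g v)].

Section Labelling.
Variable g : nat -> nat.
Hypothesis g_lt3 : forall n, g n < 3.

Lemma labellingE v : (labelling g v : nat) = g v.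
Proof. by rewrite ffunE inordK. Qed.

Lemma weight_labelling : weight (labelling g) = \sum_(v : W) g v.
Proof. by apply: eq_bigr => v _; rewrite labellingE. Qed.

End Labelling.

Definition centres2 n := 2 * (n == 0) + 2 * (n == 1).

Lemma centres2_lt3 n : centres2 n < 3. Proof. by rewrite /centres2; lia. Qed.

Lemma gammatR_bistar : gammatR G = 4.
Proof.
apply: (@gammatR_eq _ _ (labelling centres2)).
- apply/isTRDFP; split=> v; rewrite (labellingE centres2_lt3) /centres2 => fv.
  + case: (ltnP v (p + 2)) => side; [exists (vx 0)|exists (vx 1)];
    rewrite ?(labellingE centres2_lt3) /centres2; move: fv side (ltn_ord v); bistar_lia.
  + have /orP[] : (v == 0 :> nat) || (v == 1 :> nat) by move: fv; lia.
    * by exists (vx 1); rewrite ?(labellingE centres2_lt3) /centres2; bistar_lia.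
    * by exists (vx 0); rewrite ?(labellingE centres2_lt3) /centres2; bistar_lia.
- by rewrite (weight_labelling centres2_lt3) big_split /= !sum_ord_indicator.
- move=> f trdf; rewrite weight_sides.
  by rewrite (leq_add (left_sum_ge2 _ trdf) (right_sum_ge2 _ trdf)).
Qed.

Definition centres2_leaves n := centres2 n + 1 * (n == 2) + 1 * (n == p + 2).

Lemma centres2_leaves_lt3 n : centres2_leaves n < 3.
Proof. by rewrite /centres2_leaves /centres2; lia. Qed.

Lemma gammatR_del_middle : 1 < p -> gammatR G' = 6.
Proof.
move=> p_gt1; have labE := labellingE centres2_leaves_lt3.
apply: (@gammatR_eq _ _ (labelling centres2_leaves)).
- apply/isTRDFP; split=> v; rewrite labE /centres2_leaves /centres2 => fv.
  + case: (ltnP v (p + 2)) => side; [exists (vx 0)|exists (vx 1)];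
    rewrite ?labE ?del_middleE /centres2_leaves /centres2;
    move: fv side (ltn_ord v); bistar_lia.
  + have : [|| v == 0 :> nat, v == 1 :> nat, v == 2 :> nat | v == p + 2 :> nat].
      by move: fv; lia.
    case/or4P=> vE; [exists (vx 2)|exists (vx (p + 2))|exists (vx 0)|exists (vx 1)];
    rewrite ?labE ?del_middleE /centres2_leaves /centres2; move: vE; bistar_lia.
- rewrite (weight_labelling centres2_leaves_lt3) /centres2_leaves /centres2.
  by rewrite 3!big_split !sum_ord_indicator /=; move: p_gt0 q_gt1; lia.
- move=> f trdf; rewrite weight_sides.
  by rewrite (leq_add (left_sum_del_ge3 p_gt1 trdf) (right_sum_del_ge3 trdf)).
Qed.

Definition centre1_leaves n := 1 * (n == 0) + 2 * (n == 1) + 1 * (n == 2) + 1 * (n == 3).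

Lemma centre1_leaves_lt3 n : centre1_leaves n < 3.
Proof. by rewrite /centre1_leaves; lia. Qed.

Lemma gammatR_del_middle1 : p = 1 -> gammatR G' = 5.
Proof.
move=> p1; have labE := labellingE centre1_leaves_lt3.
apply: (@gammatR_eq _ _ (labelling centre1_leaves)).
- apply/isTRDFP; split=> v; rewrite labE /centre1_leaves => fv.
  + exists (vx 1); rewrite ?labE ?del_middleE /centre1_leaves;
    move: fv p1 (ltn_ord v); bistar_lia.
  + have : [|| v == 0 :> nat, v == 1 :> nat, v == 2 :> nat | v == 3 :> nat].
      by move: fv; lia.
    case/or4P=> vE; [exists (vx 2)|exists (vx 3)|exists (vx 0)|exists (vx 1)];
    rewrite ?labE ?del_middleE /centre1_leaves; move: vE p1; bistar_lia.
- rewrite (weight_labelling centre1_leaves_lt3) /centre1_leaves.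
  by rewrite 3!big_split !sum_ord_indicator /=; move: p_gt0 q_gt1; lia.
- move=> f trdf; rewrite weight_sides.
  by rewrite (leq_add (left_sum_ge2 del_middle_sub trdf) (right_sum_del_ge3 trdf)).
Qed.

Lemma middle_edge_sub_edges : middle_edge \subset edges G.
Proof.
rewrite sub1set inE; apply/existsP; exists (vx 0); apply/existsP; exists (vx 1).
by rewrite eqxx andbT; bistar_lia.
Qed.

Lemma no_isolated_del_middle : no_isolated G'.
Proof.
apply/forallP=> v; apply/existsP; have := ltn_ord v.
case: (ltnP v 2) => [v_lt2|v_ge2].
- case: (ltnP v 1) => v_lt1; [exists (vx 2)|exists (vx (p + 2))];
  rewrite del_middleE; move: v_lt1 v_lt2; bistar_lia.
- case: (ltnP v (p + 2)) => side; [exists (vx 0)|exists (vx 1)];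
  rewrite del_middleE; move: v_ge2 side; bistar_lia.
Qed.

Lemma btR_set_middle_edge : gammatR G < gammatR G' -> btR_set G middle_edge.
Proof.
move=> lt_gamma; apply: btR_set_card1; last exact: cards1.
by rewrite /bondage_cand middle_edge_sub_edges no_isolated_del_middle lt_gamma.
Qed.

End Bistar.

Theorem mainTheorem4 :
  (forall (V : finType) (e : rel V) (B : {set {set V}}),
     simple_graph e -> no_isolated e -> btR e <> None -> btR_set e B ->
     gammatR e + 1 <= gammatR (del_edges e B) <= gammatR e + 2)
  /\ (forall p q : nat, 2 <= p -> p <= q ->
       exists B, btR_set (bistar p q) B /\
         gammatR (del_edges (bistar p q) B) = gammatR (bistar p q) + 2)
  /\ (forall q : nat, 2 <= q ->
       exists B, btR_set (bistar 1 q) B /\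
         gammatR (del_edges (bistar 1 q) B) = gammatR (bistar 1 q) + 1).
Proof.
split; [|split].
- by move=> V e B [esym _] _ _; apply: btR_set_gammatR_bounds.
- move=> p q p_gt1 le_pq; have p_gt0 := ltnW p_gt1.
  have q_gt1 := leq_trans p_gt1 le_pq.
  have gam := gammatR_bistar p_gt0 q_gt1.
  have gam' := gammatR_del_middle p_gt0 q_gt1 p_gt1.
  exists (middle_edge p q); rewrite gam gam'; split => //.
  by apply: (btR_set_middle_edge p_gt0 q_gt1); rewrite gam gam'.
- move=> q q_gt1; have p_gt0 : 0 < 1 by [].
  have gam := gammatR_bistar p_gt0 q_gt1.
  have gam' := gammatR_del_middle1 p_gt0 q_gt1 erefl.
  exists (middle_edge 1 q); rewrite gam gam'; split => //.
  by apply: (btR_set_middle_edge p_gt0 q_gt1); rewrite gam gam'.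
Qed.
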